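(* Let $d\ge1$ and $c=(c_1,\dots,c_M)\in C(d,n,p)$. (1) If $x^{\underline b}=x_1^{b_1}\cdots x_n^{b_n}$ is a monomial of degree $d$ with carry pattern $c$, then for each $1\le i\le n$, $$c(x_ix^{\underline b})=(c_1,\dots,c_M,0)+(\underbrace{1,\dots,1}_{\lfloor d\rfloor'},0,\dots,0)-(\underbrace{1,\dots,1}_{\lfloor b_i\rfloor'},0,\dots,0)$$ (vectors of length $M+1$). (2) The sequence $c^1:=(c_1,\dots,c_M,0)+(1^{\lfloor d\rfloor'},0,\dots,0)-(1^{c^\sharp},0,\dots,0)$ is the maximum, in $C(d+1,n,p)$, of the set of carry patterns of the monomials $x_ix^{\underline b}$ with $1\le i\le n$ and $x^{\underline b}$ of degree $d$ with carry pattern $c$. (3) If $c'\in C(d,n,p)$ with $c'<c$, then $c'^1\le c^1$ in $C(d+1,n,p)$.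
   Context: Base-$p$ expansion $a=\sum_{j\ge0}a_jp^j$ with $0\le a_j\le p-1$ ($p$ prime); for $d\ge1$, $M=\max\{j:d_j\ne0\}$; $\lfloor a\rfloor':=\min\{j:a_j\ne p-1\}$ (so $\lfloor 0\rfloor'=0$); $(1^k,0,\dots,0)$ denotes the vector whose first $k$ entries are $1$ and the rest $0$. For a monomial $x^{\underline b}=x_1^{b_1}\cdots x_n^{b_n}$ of degree $d$ with $b_{i,j}$ the base-$p$ digits of $b_i$, its carry pattern $c(\underline b)=(c_1,\dots,c_M)$ is determined by $\sum_{i=1}^n\sum_{0\le j<\ell}b_{i,j}p^j=c_\ell p^\ell+\sum_{0\le j<\ell}d_jp^j$ for $1\le\ell\le M$, with $c_i=0$ for $i<1$ and $i>M$. $C(d,n,p)$ is the set of carry patterns of degree-$d$ monomials in $n$ variables, partially ordered componentwise (sequences of different lengths compared after padding with zeros). For $c\in C(d,n,p)$, $c^\sharp:=\min\{0\le j\le M: d_j+pc_{j+1}-c_j<n(p-1)\}$ (with $c_0=c_{M+1}=0$). *)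

From mathcomp Require Import all_boot all_order all_algebra.
Set Implicit Arguments. Unset Strict Implicit. Unset Printing Implicit Defensive.
Import Order.TTheory GRing.Theory Num.Theory.

Definition digit (p a j : nat) : nat := (a %/ p ^ j) %% p.

(* M = max {j : d_j <> 0}  (meaningful for d >= 1, p >= 2; any such j is <= d) *)
Definition topM (p d : nat) : nat :=
  \max_(j < d.+1 | digit p d j != 0) (j : nat).

(* floor'(a) = min {j : a_j <> p-1}; for p >= 2 such a j is <= a+1, and
   the digit a+1 of a is 0 <> p-1, so the search returns a+1 if no j <= a works *)
Definition floorp (p a : nat) : nat :=
  find (fun j => digit p a j != p.-1) (iota 0 a.+1).

(* monomials x^b in n variables: exponent vectors b : 'I_n -> nat *)
Definition deg (n : nat) (b : 'I_n -> nat) : nat := \sum_(i < n) b i.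

Definition incr (n : nat) (b : 'I_n -> nat) (i : 'I_n) : 'I_n -> nat :=
  fun k => b k + (k == i).

(* the carry c_l determined by
   sum_i sum_{j<l} b_{i,j} p^j = c_l p^l + sum_{j<l} d_j p^j *)
Definition carry (p n : nat) (b : 'I_n -> nat) (l : nat) : nat :=
  ((\sum_(i < n) \sum_(j < l) digit p (b i) j * p ^ j)
     - \sum_(j < l) digit p (deg b) j * p ^ j) %/ p ^ l.

(* carry pattern c(b) = (c_1,...,c_M), as a function nat -> nat that is zero
   outside [1, M] (this is the "padding with zeros" convention) *)
Definition cpat (p n : nat) (b : 'I_n -> nat) : nat -> nat :=
  fun l => if (0 < l) && (l <= topM p (deg b)) then carry p b l else 0.

Definition inC (p n d : nat) (c : nat -> nat) : Prop :=
  exists b : 'I_n -> nat, deg b = d /\ cpat p b =1 c.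

Definition leC (c c' : nat -> nat) : Prop := forall l, c l <= c' l.
Definition ltC (c c' : nat -> nat) : Prop := leC c c' /\ exists l, c l <> c' l.

(* the vector (1^k, 0, ..., 0), indexed from position 1 *)
Definition ones (k l : nat) : int := if (0 < l) && (l <= k) then 1%R else 0%R.

(* c with the conventions c_0 = c_{M+1} = 0 (c_j = 0 outside [1,M]) *)
Definition cext (p d : nat) (c : nat -> nat) (j : nat) : nat :=
  if (0 < j) && (j <= topM p d) then c j else 0.

Definition csharp (p n d : nat) (c : nat -> nat) : nat :=
  find (fun j => ((digit p d j + p * cext p d c j.+1)%:Z - (cext p d c j)%:Z
                   < (n * p.-1)%:Z)%R)
       (iota 0 (topM p d).+1).

Definition cone (p n d : nat) (c : nat -> nat) (l : nat) : int :=
  ((cext p d c l)%:Z + ones (floorp p d) l - ones (csharp p n d c) l)%R.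

From mathcomp Require Import all_boot all_order all_algebra zify.
Import Order.TTheory GRing.Theory Num.Theory.
Set Implicit Arguments. Unset Strict Implicit. Unset Printing Implicit Defensive.

(* Write m = p^l.  Since the digit sums below position l add up to d mod m, the
   carry c_l is (sum_i (b_i mod m)) div m, and d_j + p c_{j+1} - c_j is the column
   sum sum_i b_{i,j}.  Raising b_i by one raises b_i mod m by one unless
   m | b_i + 1, i.e. unless l <= floor'(b_i), in which case it drops by m - 1; this
   gives (1).  The column sum at j is maximal, n(p-1), iff every b_{i,j} is p-1, so
   c^sharp = min_i floor'(b_i), which gives (2).  For (3), a component where c'_l < c_l
   absorbs the difference of the (1^k) terms; where c'_l = c_l and l <= c^sharp, all
   b_i are -1 mod m, so sum_i (b_i mod m) takes its maximum n(m-1); the same sum for b'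
   has the same value (same carry, same degree), hence l <= c'^sharp as well. *)

Lemma dvdnS_modn m a : 0 < m -> (m %| a.+1) = (a %% m == m.-1).
Proof.
move=> m_gt0; rewrite {1}(divn_eq a m) -addnS dvdn_addr ?dvdn_mull //.
have := ltn_pmod a m_gt0; move: (a %% m) => r r_lt.
apply/idP/eqP => [/(dvdn_leq (ltn0Sn r)) | ->]; last by rewrite prednK.
lia.
Qed.

Lemma modnS_dvdn m a : a.+1 %% m + (m %| a.+1) * m = (a %% m).+1.
Proof.
case: m => [|m]; first by rewrite !modn0 muln0 addn0.
rewrite modnS; case: ifP => [|_]; last by rewrite addn0.
by rewrite dvdnS_modn // => /eqP->; rewrite mul1n.
Qed.

Lemma sum_eq_bound n (f : 'I_n -> nat) K : (forall i, f i <= K) ->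
  n * K <= \sum_(i < n) f i -> forall i, f i = K.
Proof.
move=> f_le sum_ge i; apply/eqP; rewrite eqn_leq f_le /=.
rewrite -[n in n * K]card_ord -sum_nat_const (bigD1 i) //= [X in _ <= X](bigD1 i) //= in sum_ge.
rewrite -(leq_add2r (\sum_(k < n | k != i) K)); apply: leq_trans sum_ge _.
by rewrite leq_add2l leq_sum.
Qed.

Lemma leq_deg n (b : 'I_n -> nat) i : b i <= deg b.
Proof. by rewrite /deg (bigD1 i) //= leq_addr. Qed.

Lemma lt0n_deg n (b : 'I_n -> nat) : 0 < deg b -> 0 < n.
Proof. by case: n b => // b; rewrite /deg big_ord0. Qed.

Section Digits.

Variable p : nat.
Hypothesis p_gt1 : 1 < p.

Let p_gt0 : 0 < p. Proof. exact: ltnW. Qed.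
Let pexpn_gt0 l : 0 < p ^ l. Proof. by rewrite expn_gt0 p_gt0. Qed.

Lemma digit_lt a j : digit p a j < p.
Proof. exact: ltn_pmod. Qed.

Lemma digit_eq0 a j : a < p ^ j -> digit p a j = 0.
Proof. by move=> a_lt; rewrite /digit divn_small ?mod0n. Qed.

Lemma modn_expS a l : a %% p ^ l.+1 = a %% p ^ l + digit p a l * p ^ l.
Proof.
rewrite {1}(divn_eq a (p ^ l)) {1}(divn_eq (a %/ p ^ l) p) mulnDl -mulnA.
rewrite -expnS -addnA modnMDl modn_small addnC //.
have := ltn_pmod a (pexpn_gt0 l); have := digit_lt a l.
rewrite expnS /digit; nia.
Qed.

Lemma sum_digits a l : \sum_(j < l) digit p a j * p ^ j = a %% p ^ l.
Proof.
elim: l => [|l IHl]; first by rewrite big_ord0 modn1.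
by rewrite big_ord_recr /= IHl modn_expS.
Qed.

Definition digits_max a l := all (fun j => digit p a j == p.-1) (iota 0 l).

Lemma modn_exp_maxE a l : (a %% p ^ l == (p ^ l).-1) = digits_max a l.
Proof.
rewrite /digits_max; elim: l => [|l IHl]; first by rewrite modn1.
rewrite -addn1 iotaD all_cat /= andbT add0n -IHl addn1 modn_expS expnS.
have := ltn_pmod a (pexpn_gt0 l); have := digit_lt a l.
move: (a %% p ^ l) (digit p a l) (pexpn_gt0 l) => r x P_gt0 x_lt r_lt.
apply/eqP/andP => [r_max | [/eqP-> /eqP->]]; last by nia.
split; apply/eqP; nia.
Qed.

Lemma leq_floorp_digits a l : (l <= floorp p a) = digits_max a l.
Proof.
rewrite /floorp /digits_max; set P := fun j => digit p a j != p.-1.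
have [l_le|l_gt] := leqP l a.+1.
  rewrite -(subnKC l_le) iotaD find_cat size_iota.
  case: ifP => [has_l|hasN_l].
    have := has_l; rewrite has_find size_iota => find_lt.
    rewrite leqNgt find_lt; apply/esym/negbTE; rewrite -has_predC.
    by apply: sub_has has_l => j; rewrite /P /=.
  have : ~~ has P (iota 0 l) by rewrite hasN_l.
  rewrite -all_predC leq_addr => all_l; apply/esym; apply: sub_all all_l => j.
  by rewrite /P /= negbK.
have -> : (l <= find P (iota 0 a.+1)) = false.
  apply/negbTE; rewrite -ltnNge; apply: leq_ltn_trans l_gt.
  by rewrite -[X in _ <= X](size_iota 0 a.+1) find_size.
apply/esym/negbTE/allPn; exists a; first by rewrite mem_iota; lia.
rewrite digit_eq0; [lia | exact: ltn_expl].
Qed.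

Lemma leq_floorp a l : (l <= floorp p a) = (p ^ l %| a.+1).
Proof. by rewrite leq_floorp_digits -modn_exp_maxE dvdnS_modn. Qed.

Lemma topM_ltn d : d < p ^ (topM p d).+1.
Proof.
rewrite ltnNge; apply/negP => d_ge.
have d_gt0 : 0 < d by apply: leq_trans d_ge.
set k := trunc_log p d.
have kM : (topM p d).+1 <= k by apply: trunc_log_max.
have k_lt : k < d.+1.
  by apply: leq_trans (ltn_expl k p_gt1) _; apply: leq_trans (trunc_logP p_gt1 d_gt0) _.
have digit_k : digit p d k != 0.
  rewrite /digit modn_small; first by rewrite -lt0n divn_gt0 // trunc_logP.
  by rewrite ltn_divLR // -expnS trunc_log_ltn.
have := @leq_bigmax_cond _ (fun j : 'I_d.+1 => digit p d j != 0)
  (fun j => j : nat) (Ordinal k_lt) digit_k.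
rewrite -/(topM p d) /=; lia.
Qed.

End Digits.

Section Carries.

Variables p n : nat.
Hypothesis p_gt1 : 1 < p.
Implicit Type b : 'I_n -> nat.

Let p_gt0 : 0 < p. Proof. exact: ltnW. Qed.
Let pexpn_gt0 l : 0 < p ^ l. Proof. by rewrite expn_gt0 p_gt0. Qed.

Definition trunc_sum b l := \sum_(i < n) b i %% p ^ l.
Definition column_sum b j := \sum_(i < n) digit p (b i) j.

Lemma trunc_sum_mod b l : trunc_sum b l = deg b %[mod p ^ l].
Proof. exact: modn_summ. Qed.

Lemma carryE b l : carry p b l = trunc_sum b l %/ p ^ l.
Proof.
rewrite /carry (eq_bigr (fun i => b i %% p ^ l)) => [|i _]; last exact: sum_digits.
rewrite sum_digits // -/(trunc_sum b l) -trunc_sum_mod.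
by rewrite {1}(divn_eq (trunc_sum b l) (p ^ l)) addnK mulnK.
Qed.

Lemma trunc_sumE b l : trunc_sum b l = carry p b l * p ^ l + deg b %% p ^ l.
Proof. by rewrite carryE -trunc_sum_mod -divn_eq. Qed.

Lemma carry_eq0 b l : (l == 0) || (topM p (deg b) < l) -> carry p b l = 0.
Proof.
case/orP => [/eqP-> | M_lt]; rewrite carryE.
  by rewrite expn0 divn1; apply: big1 => i _; rewrite modn1.
have deg_lt : deg b < p ^ l by apply: leq_trans (topM_ltn p_gt1 _) _; rewrite leq_pexp2l.
rewrite /trunc_sum (eq_bigr b) ?divn_small // => i _.
by rewrite modn_small //; apply: leq_ltn_trans (leq_deg b i) deg_lt.
Qed.

Lemma cpatE b : cpat p b =1 carry p b.
Proof.
move=> l; rewrite /cpat; case: ifP => // /negbT.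
by rewrite negb_and -leqNgt leqn0 -ltnNge => /carry_eq0->.
Qed.

Lemma cextE d c b : deg b = d -> cpat p b =1 c -> cext p d c =1 carry p b.
Proof.
move=> <- cpat_b l; rewrite /cext -cpat_b cpatE; case: ifP => // /negbT.
by rewrite negb_and -leqNgt leqn0 -ltnNge => /carry_eq0->.
Qed.

Lemma trunc_sum_incr b i l :
  trunc_sum (incr b i) l + (p ^ l %| (b i).+1) * p ^ l = (trunc_sum b l).+1.
Proof.
rewrite /trunc_sum (bigD1 i) //= [in RHS](bigD1 i) //= {1}/incr eqxx addn1.
rewrite addnAC modnS_dvdn addSn; congr (_ + _).+1.
by apply: eq_bigr => k /negbTE k_neq; rewrite /incr k_neq addn0.
Qed.

(* Adding 1 to b_i wraps its l lowest digits around exactly when l <= floor'(b_i),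
   and wraps those of d exactly when l <= floor'(d). *)
Lemma carry_incr b i l :
  Posz (carry p (incr b i) l)
  = (Posz (carry p b l) + Posz (l <= floorp p (deg b)) - Posz (l <= floorp p (b i)))%R.
Proof.
rewrite !carryE !leq_floorp //.
have carry_out : (p ^ l %| (trunc_sum b l).+1) = (p ^ l %| (deg b).+1).
  by rewrite !dvdnS_modn // trunc_sum_mod.
have carry_eq : (trunc_sum (incr b i) l %/ p ^ l + (p ^ l %| (b i).+1)
                 = trunc_sum b l %/ p ^ l + (p ^ l %| (deg b).+1))%N.
  by rewrite -divnDMl // trunc_sum_incr divnS // carry_out addnC.
by rewrite -PoszD -carry_eq PoszD addrK.
Qed.

Lemma column_sum_carry b l :
  column_sum b l + carry p b l = p * carry p b l.+1 + digit p (deg b) l.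
Proof.
have trunc_sumS : trunc_sum b l.+1 = trunc_sum b l + column_sum b l * p ^ l.
  rewrite /trunc_sum /column_sum big_distrl -big_split /=.
  by apply: eq_bigr => i _; rewrite modn_expS.
move: trunc_sumS; rewrite !trunc_sumE modn_expS // expnS => E.
apply/eqP; rewrite -(eqn_pmul2r (pexpn_gt0 l)); apply/eqP.
rewrite !mulnDl -mulnA; lia.
Qed.

Lemma forall_leq_floorpE b l :
  [forall i, l <= floorp p (b i)] = (trunc_sum b l == n * (p ^ l).-1).
Proof.
have mod_le i : b i %% p ^ l <= (p ^ l).-1 by rewrite -ltnS prednK ?ltn_pmod.
apply/forallP/eqP => [all_max | sum_max i].
  rewrite /trunc_sum -[n in n * _]card_ord -sum_nat_const.
  by apply: eq_bigr => i _; apply/eqP; rewrite -dvdnS_modn // -leq_floorp.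
rewrite leq_floorp // dvdnS_modn //; apply/eqP; apply: sum_eq_bound mod_le _ i.
by rewrite -/(trunc_sum b l) sum_max.
Qed.

End Carries.

Lemma onesB x y l : (Posz (l <= x) - Posz (l <= y) = ones x l - ones y l)%R.
Proof. by case: l => [|l]; rewrite /ones //= ?subrr; case: (l < x); case: (l < y). Qed.

Lemma ones_ge0 k l : (0 <= ones k l)%R.
Proof. by rewrite /ones; case: ifP. Qed.

Lemma ones_le1 k l : (ones k l <= 1)%R.
Proof. by rewrite /ones; case: ifP. Qed.

Lemma ones_le x y l : x <= y -> (ones x l <= ones y l)%R.
Proof.
rewrite /ones => le_xy; case: ifP => [/andP[l_gt0 le_lx] | _]; last by case: ifP.
by rewrite l_gt0 (leq_trans le_lx le_xy).
Qed.

Section CarryPattern.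

Variables (p n d : nat) (c : nat -> nat) (b : 'I_n -> nat).
Hypotheses (p_gt1 : 1 < p) (deg_b : deg b = d) (cpat_b : cpat p b =1 c).

Lemma cpat_incr i l :
  Posz (cpat p (incr b i) l)
  = (Posz (cext p d c l) + ones (floorp p d) l - ones (floorp p (b i)) l)%R.
Proof.
rewrite cpatE // carry_incr // (cextE p_gt1 deg_b cpat_b) deg_b.
by rewrite -addrA onesB addrA.
Qed.

(* d_j + p c_{j+1} - c_j is the column sum of the digits of the b_i in position j,
   so c^sharp is the first position below M+1 where some b_i has a digit < p-1. *)
Lemma csharpE :
  csharp p n d c = find (fun j => column_sum p b j < n * p.-1) (iota 0 (topM p d).+1).
Proof.
apply: eq_find => j; rewrite !(cextE p_gt1 deg_b cpat_b) -deg_b addnC.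
by rewrite -column_sum_carry // PoszD addrK ltz_nat.
Qed.

Lemma column_sum_csharp : 0 < n -> column_sum p b (csharp p n d c) < n * p.-1.
Proof.
move=> n_gt0; rewrite csharpE; set P := fun j => _ < _; set s := iota _ _.
have [has_s | /hasNfind->] := boolP (has P s).
  have := nth_find 0 has_s; rewrite has_find size_iota in has_s.
  by rewrite nth_iota // add0n.
rewrite size_iota /P /column_sum big1 => [|i _].
  by rewrite muln_gt0 n_gt0 -subn1 subn_gt0.
by rewrite digit_eq0 // -deg_b (leq_ltn_trans (leq_deg b i)) // topM_ltn.
Qed.

Lemma csharp_le_floorp i : csharp p n d c <= floorp p (b i).
Proof.
rewrite leq_floorp_digits //; apply/allP => j; rewrite mem_iota /= => j_lt.
have full_j : n * p.-1 <= column_sum p b j.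
  move: j_lt; rewrite csharpE => j_lt.
  have := find_size (fun k => column_sum p b k < n * p.-1) (iota 0 (topM p d).+1).
  rewrite size_iota => find_le; have j_le := leq_trans j_lt find_le.
  by have := before_find 0 j_lt; rewrite nth_iota // add0n => /negbT; rewrite -leqNgt.
have digit_le k : digit p (b k) j <= p.-1 by rewrite -ltnS prednK ?digit_lt // ltnW.
by rewrite (sum_eq_bound digit_le full_j).
Qed.

Lemma exists_floorp_le_csharp : 0 < n -> exists i, floorp p (b i) <= csharp p n d c.
Proof.
move=> n_gt0; set j := csharp p n d c.
have [i digit_i | all_max] := pickP (fun i => digit p (b i) j != p.-1).
  exists i; rewrite leqNgt leq_floorp_digits //; apply: contra digit_i => /allP.
  by apply; rewrite mem_iota add0n ltnSn.
have := column_sum_csharp n_gt0; rewrite /column_sum (eq_bigr (fun=> p.-1)).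
  by rewrite sum_nat_const card_ord ltnn.
by move=> k _; apply/eqP/negbFE/all_max.
Qed.

Lemma leq_csharpE l : 0 < n -> (l <= csharp p n d c) = [forall i, l <= floorp p (b i)].
Proof.
move=> n_gt0; apply/idP/forallP => [l_le i | l_le].
  exact: leq_trans l_le (csharp_le_floorp i).
by have [i /(leq_trans (l_le i))] := exists_floorp_le_csharp n_gt0.
Qed.

Lemma cpat_incr_le_cone i l : (Posz (cpat p (incr b i) l) <= cone p n d c l)%R.
Proof. by rewrite cpat_incr /cone lerD2l lerN2 ones_le // csharp_le_floorp. Qed.

Lemma exists_cpat_incr_cone :
  0 < n -> exists i, forall l, Posz (cpat p (incr b i) l) = cone p n d c l.
Proof.
move=> /exists_floorp_le_csharp[i floorp_le]; exists i => l.
have floorp_eq : floorp p (b i) = csharp p n d c.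
  by apply/eqP; rewrite eqn_leq floorp_le csharp_le_floorp.
by rewrite cpat_incr floorp_eq.
Qed.

End CarryPattern.

Lemma leq_csharp_eq_carry p n d c c' (b b' : 'I_n -> nat) l : 1 < p -> 0 < n ->
  deg b = d -> cpat p b =1 c -> deg b' = d -> cpat p b' =1 c' ->
  carry p b' l = carry p b l -> l <= csharp p n d c -> l <= csharp p n d c'.
Proof.
move=> p_gt1 n_gt0 deg_b cpat_b deg_b' cpat_b' carry_eq.
rewrite (leq_csharpE p_gt1 deg_b cpat_b _ n_gt0) (leq_csharpE p_gt1 deg_b' cpat_b' _ n_gt0).
by rewrite !forall_leq_floorpE // !trunc_sumE // carry_eq deg_b deg_b'.
Qed.

Lemma cone_le p n d c c' (b b' : 'I_n -> nat) : 1 < p -> 0 < n ->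
  deg b = d -> cpat p b =1 c -> deg b' = d -> cpat p b' =1 c' ->
  leC c' c -> forall l, (cone p n d c' l <= cone p n d c l)%R.
Proof.
move=> p_gt1 n_gt0 deg_b cpat_b deg_b' cpat_b' le_c'c l.
rewrite /cone (cextE p_gt1 deg_b cpat_b) (cextE p_gt1 deg_b' cpat_b').
have := le_c'c l; rewrite -cpat_b -cpat_b' !cpatE // leq_eqVlt.
case/predU1P => [carry_eq | carry_lt].
  rewrite carry_eq lerD2l lerN2 /ones; case: ifP => [/andP[l_gt0 l_le] | _].
    by rewrite l_gt0 (leq_csharp_eq_carry p_gt1 n_gt0 deg_b cpat_b deg_b' cpat_b').
  by case: ifP.
have := ones_le1 (csharp p n d c) l; have := ones_ge0 (csharp p n d c') l.
move: carry_lt; lia.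
Qed.

Theorem mainTheorem7 (p n d : nat) (c : nat -> nat) :
  prime p -> 1 <= d -> inC p n d c ->
  (forall b : 'I_n -> nat, deg b = d -> cpat p b =1 c ->
     forall (i : 'I_n) (l : nat),
       Posz (cpat p (incr b i) l)
       = (Posz (cext p d c l) + ones (floorp p d) l - ones (floorp p (b i)) l)%R)
  /\
  ((exists (b : 'I_n -> nat) (i : 'I_n),
      deg b = d /\ cpat p b =1 c /\
      forall l, Posz (cpat p (incr b i) l) = cone p n d c l)
   /\ (forall (b : 'I_n -> nat) (i : 'I_n), deg b = d -> cpat p b =1 c ->
        forall l, (Posz (cpat p (incr b i) l) <= cone p n d c l)%R))
  /\
  (forall c' : nat -> nat, inC p n d c' -> ltC c' c ->
     forall l, (cone p n d c' l <= cone p n d c l)%R).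
Proof.
move=> /prime_gt1 p_gt1 d_gt0 [b [deg_b cpat_b]].
have n_gt0 : 0 < n by apply: (@lt0n_deg _ b); rewrite deg_b.
split; first by move=> b' deg_b' cpat_b'; apply: cpat_incr.
split; first split.
- have [i cpat_incr_i] := exists_cpat_incr_cone p_gt1 deg_b cpat_b n_gt0.
  by exists b, i.
- by move=> b' i deg_b' cpat_b'; apply: cpat_incr_le_cone.
- move=> c' [b' [deg_b' cpat_b']] [le_c'c _].
  exact: (cone_le p_gt1 n_gt0 deg_b cpat_b deg_b' cpat_b').
Qed.
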